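(* Let $t_1>t_0>0$ and suppose there are continuous $f,g\colon[0,1]\to(0,\infty)$ and $\alpha,\beta>0$ with $\inf_{x\in[0,1]}\frac{\mathcal M_{t_0}g(x)}{g(x)}\ge e^{\beta}$ and $\sup_{x\in[0,1]}\frac{\mathcal M_{t_1}f(x)}{f(x)}\le e^{-\alpha}$. Then $t_0<\dim_H(\mathcal E)<t_1$.
   Context: Let $T_i(x)=\sqrt{i+x}-1$, $i=1,3$, maps $[0,1]\to[0,1]$. For $t\in\mathbb R$ let $\mathcal M_tf(x)=|T_1'(x)|^tf(T_1x)+|T_3'(x)|^tf(T_3x)$ on $C([0,1])$. $\mathcal E=\{-1+\sqrt{a_1+\sqrt{a_2+\cdots}}: a_k\in\{1,3\}\}$, where the infinite radical denotes $\lim_n T_{a_1}\circ\cdots\circ T_{a_n}(0)$; $\dim_H$ is Hausdorff dimension. *)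

From Stdlib Require Import Reals Lra.
From Coquelicot Require Import Coquelicot.
Open Scope R_scope.

Definition T (a x : R) : R := sqrt (a + x) - 1.

Definition Mop (t : R) (f : R -> R) (x : R) : R :=
  Rpower (Rabs (Derive (T 1) x)) t * f (T 1 x)
  + Rpower (Rabs (Derive (T 3) x)) t * f (T 3 x).

(* comp a n x = T_{a 0} o T_{a 1} o ... o T_{a (n-1)} (x) *)
Fixpoint comp (a : nat -> R) (n : nat) (x : R) : R :=
  match n with
  | O => x
  | S m => comp a m (T (a m) x)
  end.

(* The set E of infinite nested radicals with digits in {1,3} *)
Definition E_set : R -> Prop := fun y =>
  exists a : nat -> R, (forall k, a k = 1 \/ a k = 3) /\
    is_lim_seq (fun n => comp a n 0) y.

(* Diameter of a subset of R (in Rbar; -oo for the empty set). *)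
Definition diam (U : R -> Prop) : Rbar :=
  Lub_Rbar (fun r => exists x y, U x /\ U y /\ r = Rabs (x - y)).

(* diam(U)^s for s > 0, with the convention 0^s = 0 (and empty set contributes 0). *)
Definition diam_pow (s : R) (U : R -> Prop) : R :=
  match diam U with
  | Finite d => if Rlt_dec 0 d then Rpower d s else 0
  | _ => 0
  end.

(* H^s(E) = 0 : for every delta > 0, the delta-approximate Hausdorff outer
   measure H^s_delta(E) (inf over countable delta-covers of sum diam^s) is 0. *)
Definition hausdorff_null (s : R) (E : R -> Prop) : Prop :=
  forall delta eps : R, 0 < delta -> 0 < eps ->
    exists U : nat -> (R -> Prop),
      (forall y, E y -> exists n, U n y) /\
      (forall n, Rbar_le (diam (U n)) (Finite delta)) /\
      (forall N, sum_n (fun n => diam_pow s (U n)) N <= eps).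

Definition dimH (E : R -> Prop) : Rbar :=
  Glb_Rbar (fun s => 0 < s /\ hausdorff_null s E).

Definition cont_on01 (f : R -> R) : Prop :=
  forall x, 0 <= x <= 1 ->
    filterlim f (within (fun y => 0 <= y <= 1) (locally x)) (locally (f x)).

(* The words w over {1,3} index the cylinders T_w([0,1]) whose nested intersections form E.
   The maps T_b contract by a factor between 1/4 and 1/2 and have bounded distortion: T_w'
   varies by at most a factor e on [0,1], so the length of T_w([0,1]) is comparable to
   T_w'(0). Iterating M_t on g (resp. f) shows that the partition sums
   Z_n(s) = sum_(|w| = n) T_w'(0)^s stay bounded below for s up to t0 + beta/ln 4 (resp. decay
   geometrically for s down to t1 - alpha/(2 ln 4)). Decay of Z_n(s) gives H^s(E) = 0 by
   covering E with the cylinders of level n. Conversely, by compactness (Konig's lemma) a cover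
   of E with small s-sum is refined by a finite cut set of words whose cylinders are comparable
   to the cover elements, boundedly many per element; supermultiplicativity of Z_n bounds the
   s-sum over any cut set from below, a contradiction. *)

From Pilot Require Import Defs.
From Stdlib Require Import Reals Lra List Arith Lia Classical ClassicalEpsilon.
From Coquelicot Require Import Coquelicot.
Import ListNotations.
Open Scope R_scope.

Lemma exp_le_compat x y : x <= y -> exp x <= exp y.
Proof. intros [Hlt|Heq]; [left; apply exp_increasing, Hlt | rewrite Heq; lra]. Qed.

Lemma Rpower_pos x y : 0 < Rpower x y.
Proof. apply exp_pos. Qed.

Lemma Rpower_base_1 y : Rpower 1 y = 1.
Proof. unfold Rpower. rewrite ln_1, Rmult_0_r, exp_0. reflexivity. Qed.

Definition digit (b : bool) : R := if b then 3 else 1.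

Definition cyl_map (w : list bool) (x : R) : R :=
  fold_right (fun b y => T (digit b) y) x w.

Definition dT (b : bool) (y : R) : R := / (2 * sqrt (digit b + y)).

Fixpoint cyl_deriv (w : list bool) (x : R) : R :=
  match w with
  | [] => 1
  | b :: w' => dT b (cyl_map w' x) * cyl_deriv w' x
  end.

Definition cyl_len (w : list bool) : R := cyl_map w 1 - cyl_map w 0.

Lemma sqrt_digit_ge1 b x : 0 <= x -> 1 <= sqrt (digit b + x).
Proof.
  intros Hx. rewrite <- sqrt_1. apply sqrt_le_1_alt. destruct b; simpl; lra.
Qed.

Lemma sqrt_digit_le2 b x : x <= 1 -> sqrt (digit b + x) <= 2.
Proof.
  intros Hx. rewrite <- (sqrt_square 2) by lra. apply sqrt_le_1_alt.
  destruct b; simpl; lra.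
Qed.

Lemma T_ge0 b x : 0 <= x -> 0 <= T (digit b) x.
Proof. intros Hx. pose proof (sqrt_digit_ge1 b x Hx). unfold T. lra. Qed.

Lemma T_unit b x : 0 <= x <= 1 -> 0 <= T (digit b) x <= 1.
Proof.
  intros Hx. split; [apply T_ge0; lra|].
  pose proof (sqrt_digit_le2 b x ltac:(lra)). unfold T. lra.
Qed.

Lemma T_le b x y : 0 <= x -> x <= y -> T (digit b) x <= T (digit b) y.
Proof.
  intros. unfold T.
  assert (sqrt (digit b + x) <= sqrt (digit b + y)) by (apply sqrt_le_1_alt; lra).
  lra.
Qed.

Lemma T_lt b x y : 0 <= x -> x < y -> T (digit b) x < T (digit b) y.
Proof.
  intros. unfold T.
  assert (sqrt (digit b + x) < sqrt (digit b + y)).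
  { apply sqrt_lt_1_alt. destruct b; simpl; lra. }
  lra.
Qed.

Lemma T_contract b x y : 0 <= x -> 0 <= y ->
  Rabs (T (digit b) x - T (digit b) y) <= Rabs (x - y) / 2.
Proof.
  intros Hx Hy. unfold T.
  set (A := sqrt (digit b + x)). set (B := sqrt (digit b + y)).
  assert (HA : 1 <= A) by apply sqrt_digit_ge1, Hx.
  assert (HB : 1 <= B) by apply sqrt_digit_ge1, Hy.
  assert (Hdiff : (A - B) * (A + B) = x - y).
  { replace ((A - B) * (A + B)) with (A * A - B * B) by ring. unfold A, B.
    rewrite !sqrt_sqrt by (destruct b; simpl; lra). ring. }
  replace (A - 1 - (B - 1)) with (A - B) by ring.
  rewrite <- Hdiff, Rabs_mult, (Rabs_right (A + B)) by lra.
  pose proof (Rabs_pos (A - B)). nra.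
Qed.

Lemma cyl_map_app u v x : cyl_map (u ++ v) x = cyl_map u (cyl_map v x).
Proof. apply fold_right_app. Qed.

Lemma cyl_map_ge0 w x : 0 <= x -> 0 <= cyl_map w x.
Proof. induction w; simpl; auto using T_ge0. Qed.

Lemma cyl_map_unit w x : 0 <= x <= 1 -> 0 <= cyl_map w x <= 1.
Proof. induction w; simpl; auto using T_unit. Qed.

Lemma cyl_map_le w x y : 0 <= x -> x <= y -> cyl_map w x <= cyl_map w y.
Proof. induction w; simpl; auto using T_le, cyl_map_ge0. Qed.

Lemma cyl_map_lt w x y : 0 <= x -> x < y -> cyl_map w x < cyl_map w y.
Proof. induction w; simpl; auto using T_lt, cyl_map_ge0. Qed.

Lemma dT_pos b y : 0 <= y -> 0 < dT b y.
Proof.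
  intros Hy. pose proof (sqrt_digit_ge1 b y Hy). unfold dT.
  apply Rinv_0_lt_compat. lra.
Qed.

Lemma dT_bounds b y : 0 <= y <= 1 -> / 4 <= dT b y <= / 2.
Proof.
  intros Hy. pose proof (sqrt_digit_ge1 b y ltac:(lra)).
  pose proof (sqrt_digit_le2 b y ltac:(lra)).
  unfold dT. split; apply Rinv_le_contravar; lra.
Qed.

Lemma dT_distortion b x y : 0 <= x -> 0 <= y ->
  dT b x <= exp (Rabs (x - y) / 2) * dT b y.
Proof.
  intros Hx Hy. unfold dT.
  set (z := Rabs (x - y)). set (E := exp (z / 2)).
  assert (HE : 0 < E) by apply exp_pos.
  assert (HEE : E * E = exp z) by (unfold E; rewrite <- exp_plus; f_equal; lra).
  pose proof (exp_ineq1_le z).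
  assert (Hyx : y - x <= z) by (unfold z; rewrite Rabs_minus_sym; apply Rle_abs).
  pose proof (sqrt_digit_ge1 b x Hx). pose proof (sqrt_digit_ge1 b y Hy).
  (* [sqrt (d + y) <= E sqrt (d + x)] because [d + y <= (1 + z) (d + x) <= E^2 (d + x)] *)
  assert (Hkey : sqrt (digit b + y) <= E * sqrt (digit b + x)).
  { rewrite <- (sqrt_square E), <- sqrt_mult by (destruct b; simpl; nra).
    apply sqrt_le_1_alt. rewrite HEE. assert (0 <= z) by apply Rabs_pos.
    assert (0 <= (exp z - (1 + z)) * (digit b + x))
      by (apply Rmult_le_pos; destruct b; simpl; lra).
    destruct b; simpl in *; nra. }
  rewrite <- (Rinv_inv E), <- Rinv_mult.
  apply Rinv_le_contravar.
  - apply Rmult_lt_0_compat; [apply Rinv_0_lt_compat|]; lra.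
  - apply (Rmult_le_reg_l E); auto.
    rewrite <- Rmult_assoc, Rinv_r by lra. lra.
Qed.

Lemma cyl_deriv_app u v x : cyl_deriv (u ++ v) x = cyl_deriv u (cyl_map v x) * cyl_deriv v x.
Proof. induction u; simpl; [ring|]. rewrite IHu, cyl_map_app. ring. Qed.

Lemma cyl_deriv_pos w x : 0 <= x -> 0 < cyl_deriv w x.
Proof.
  induction w; simpl; intros Hx; [lra|].
  apply Rmult_lt_0_compat; auto using dT_pos, cyl_map_ge0.
Qed.

Lemma cyl_deriv_le_pow w x : 0 <= x <= 1 -> cyl_deriv w x <= (/ 2) ^ length w.
Proof.
  induction w as [|b w IHw]; simpl; intros Hx; [lra|].
  pose proof (dT_bounds b (cyl_map w x) (cyl_map_unit w x Hx)).
  pose proof (cyl_deriv_pos w x ltac:(lra)).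
  specialize (IHw Hx). nra.
Qed.

(* The contraction of [T_b] makes the distortion exponents [|x - y| / 2^k] summable. *)
Lemma cyl_deriv_distortion w x y : 0 <= x <= 1 -> 0 <= y <= 1 ->
  cyl_deriv w x <= exp (Rabs (x - y)) * cyl_deriv w y.
Proof.
  revert x y. induction w as [|b w IHw] using rev_ind; intros x y Hx Hy.
  { pose proof (exp_ineq1_le (Rabs (x - y))). pose proof (Rabs_pos (x - y)).
    simpl. lra. }
  rewrite !cyl_deriv_app. simpl. rewrite !Rmult_1_r.
  set (x' := T (digit b) x). set (y' := T (digit b) y).
  pose proof (IHw x' y' (T_unit _ _ Hx) (T_unit _ _ Hy)) as Hrec.
  assert (Hexp : exp (Rabs (x' - y')) <= exp (Rabs (x - y) / 2))
    by (apply exp_le_compat, T_contract; lra).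
  pose proof (dT_distortion b x y ltac:(lra) ltac:(lra)) as HdT.
  pose proof (cyl_deriv_pos w y' ltac:(apply T_ge0; lra)).
  pose proof (dT_pos b x ltac:(lra)).
  replace (exp (Rabs (x - y)))
    with (exp (Rabs (x - y) / 2) * exp (Rabs (x - y) / 2))
    by (rewrite <- exp_plus; f_equal; lra).
  pose proof (exp_pos (Rabs (x - y) / 2)).
  set (E := exp (Rabs (x - y) / 2)) in *.
  apply Rle_trans with (E * cyl_deriv w y' * dT b x).
  - apply Rmult_le_compat_r; [lra|]. eapply Rle_trans; [apply Hrec|].
    apply Rmult_le_compat_r; lra.
  - replace (E * E * (cyl_deriv w y' * dT b y))
      with (E * cyl_deriv w y' * (E * dT b y)) by ring.
    apply Rmult_le_compat_l; [nra | exact HdT].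
Qed.

Lemma cyl_deriv_unit_distortion w x y : 0 <= x <= 1 -> 0 <= y <= 1 ->
  cyl_deriv w x <= exp 1 * cyl_deriv w y.
Proof.
  intros Hx Hy. eapply Rle_trans; [apply cyl_deriv_distortion; eauto|].
  apply Rmult_le_compat_r; [left; apply cyl_deriv_pos; lra|].
  apply exp_le_compat, Rabs_le. lra.
Qed.

Lemma cyl_deriv_app_bounds u v :
  cyl_deriv u 0 * cyl_deriv v 0 <= exp 1 * cyl_deriv (u ++ v) 0 /\
  cyl_deriv (u ++ v) 0 <= exp 1 * (cyl_deriv u 0 * cyl_deriv v 0).
Proof.
  rewrite cyl_deriv_app. pose proof (cyl_map_unit v 0 ltac:(lra)) as Hv.
  pose proof (cyl_deriv_unit_distortion u 0 (cyl_map v 0) ltac:(lra) Hv).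
  pose proof (cyl_deriv_unit_distortion u (cyl_map v 0) 0 Hv ltac:(lra)).
  pose proof (cyl_deriv_pos v 0 ltac:(lra)). split; nra.
Qed.

Lemma T_derive a y : 0 < a + y -> is_derive (T a) y (/ (2 * sqrt (a + y))).
Proof.
  intros Hy. unfold T. auto_derive; [lra|].
  assert (0 < sqrt (a + y)) by (apply sqrt_lt_R0; lra). field. lra.
Qed.

Lemma cyl_map_gt_m1 w x : -1 < x -> -1 < cyl_map w x.
Proof.
  induction w as [|b w IHw]; simpl; intros Hx; auto.
  specialize (IHw Hx). unfold T.
  assert (0 < sqrt (digit b + cyl_map w x)) by (apply sqrt_lt_R0; destruct b; simpl; lra).
  lra.
Qed.

Lemma cyl_map_derive w x : -1 < x -> is_derive (cyl_map w) x (cyl_deriv w x).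
Proof.
  induction w as [|b w IHw]; intros Hx.
  - apply (is_derive_ext (fun y => y)); [reflexivity|apply (is_derive_id (K := R_AbsRing))].
  - change (is_derive (fun y => T (digit b) (cyl_map w y)) x (dT b (cyl_map w x) * cyl_deriv w x)).
    pose proof (cyl_map_gt_m1 w x Hx).
    assert (HT := T_derive (digit b) (cyl_map w x) ltac:(destruct b; simpl; lra)).
    assert (Hc := is_derive_comp _ _ x _ _ HT (IHw Hx)).
    rewrite Rmult_comm. exact Hc.
Qed.

Lemma cyl_len_mvt w : exists c, 0 <= c <= 1 /\ cyl_len w = cyl_deriv w c.
Proof.
  destruct (MVT_gen (cyl_map w) 0 1 (cyl_deriv w)) as [c [Hc Hm]].
  - intros x Hx. apply cyl_map_derive. rewrite Rmin_left in Hx; lra.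
  - intros x Hx. apply continuity_pt_filterlim, (ex_derive_continuous (cyl_map w)).
    eexists. apply cyl_map_derive. rewrite Rmin_left in Hx; lra.
  - rewrite Rmin_left, Rmax_right in Hc by lra.
    exists c. split; auto. unfold cyl_len. rewrite Hm. ring.
Qed.

Lemma cyl_len_le w : cyl_len w <= exp 1 * cyl_deriv w 0.
Proof.
  destruct (cyl_len_mvt w) as [c [Hc ->]]. apply cyl_deriv_unit_distortion; lra.
Qed.

Lemma cyl_len_ge w : cyl_deriv w 0 <= exp 1 * cyl_len w.
Proof.
  destruct (cyl_len_mvt w) as [c [Hc ->]]. apply cyl_deriv_unit_distortion; lra.
Qed.

Lemma cyl_len_pos w : 0 < cyl_len w.
Proof. unfold cyl_len. pose proof (cyl_map_lt w 0 1). lra. Qed.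

Lemma cyl_len_le_pow w : cyl_len w <= exp 1 * (/ 2) ^ length w.
Proof.
  eapply Rle_trans; [apply cyl_len_le|].
  apply Rmult_le_compat_l; [left; apply exp_pos|]. apply cyl_deriv_le_pow. lra.
Qed.

Lemma cyl_len_snoc u b : cyl_len u <= 4 * exp 1 * cyl_len (u ++ [b]).
Proof.
  destruct (cyl_len_mvt (u ++ [b])) as [c [Hc ->]].
  destruct (cyl_len_mvt u) as [c' [Hc' ->]].
  rewrite cyl_deriv_app. simpl. rewrite Rmult_1_r.
  pose proof (dT_bounds b c Hc).
  pose proof (cyl_deriv_unit_distortion u c' (T (digit b) c) Hc' (T_unit _ _ Hc)).
  pose proof (cyl_deriv_pos u (T (digit b) c) ltac:(apply T_ge0; lra)).
  pose proof (exp_pos 1).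
  set (D := cyl_deriv u (T (digit b) c)) in *.
  assert (0 <= exp 1 * D * (4 * dT b c - 1)) by (apply Rmult_le_pos; nra).
  simpl. nra.
Qed.

Lemma cyl_len_app_le u v : cyl_len (u ++ v) <= cyl_len u.
Proof.
  unfold cyl_len. rewrite !cyl_map_app.
  pose proof (cyl_map_unit v 0 ltac:(lra)). pose proof (cyl_map_unit v 1 ltac:(lra)).
  pose proof (cyl_map_le u 0 (cyl_map v 0) ltac:(lra) ltac:(lra)).
  pose proof (cyl_map_le u (cyl_map v 1) 1 ltac:(lra) ltac:(lra)). lra.
Qed.

Lemma Derive_T a x : 0 < a + x -> Derive (T a) x = / (2 * sqrt (a + x)).
Proof. intros. apply is_derive_unique, T_derive. auto. Qed.

Definition transfer (s : R) (h : R -> R) (y : R) : R :=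
  Rpower (dT false y) s * h (T (digit false) y) + Rpower (dT true y) s * h (T (digit true) y).

Lemma Mop_transfer t h x : 0 <= x -> Mop t h x = transfer t h x.
Proof.
  intros Hx. unfold Mop, transfer.
  change (T 1) with (T (digit false)). change (T 3) with (T (digit true)).
  rewrite !Derive_T by (simpl; lra).
  rewrite !Rabs_right; [reflexivity| |]; apply Rle_ge, Rlt_le, (dT_pos _ _ Hx).
Qed.

Definition lsum {A} (F : A -> R) (l : list A) : R := fold_right (fun x acc => F x + acc) 0 l.

Section ListSums.
Context {A : Type}.
Implicit Types (F G : A -> R) (l : list A).

Lemma lsum_app F l1 l2 : lsum F (l1 ++ l2) = lsum F l1 + lsum F l2.
Proof. induction l1; simpl; [ring|]. rewrite IHl1. ring. Qed.

Lemma lsum_ext F G l : (forall x, In x l -> F x = G x) -> lsum F l = lsum G l.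
Proof. induction l; simpl; intros H; auto. rewrite H, IHl; auto. Qed.

Lemma lsum_le F G l : (forall x, In x l -> F x <= G x) -> lsum F l <= lsum G l.
Proof. induction l; simpl; intros H; [lra|]. apply Rplus_le_compat; auto. Qed.

Lemma lsum_zero l : lsum (fun _ => 0) l = 0.
Proof. induction l; simpl; auto. rewrite IHl; ring. Qed.

Lemma lsum_nonneg F l : (forall x, In x l -> 0 <= F x) -> 0 <= lsum F l.
Proof. intros H. rewrite <- (lsum_zero l). apply lsum_le. exact H. Qed.

Lemma lsum_pos F l a : In a l -> (forall x, 0 < F x) -> 0 < lsum F l.
Proof.
  induction l as [|b l IHl]; simpl; intros Ha HF; [contradiction|].
  pose proof (HF b). destruct Ha as [<-|Ha].
  - pose proof (lsum_nonneg F l (fun x _ => Rlt_le _ _ (HF x))). lra.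
  - specialize (IHl Ha HF). lra.
Qed.

Lemma lsum_const c l : lsum (fun _ => c) l = INR (length l) * c.
Proof. induction l; simpl lsum; simpl length; [simpl; ring|]. rewrite IHl, S_INR. ring. Qed.

Lemma lsum_scal F c l : lsum (fun x => c * F x) l = c * lsum F l.
Proof. induction l; simpl; [ring|]. rewrite IHl. ring. Qed.

Lemma lsum_plus F G l : lsum (fun x => F x + G x) l = lsum F l + lsum G l.
Proof. induction l; simpl; [ring|]. rewrite IHl. ring. Qed.

Lemma lsum_filter F (p : A -> bool) l :
  lsum F (filter p l) = lsum (fun x => if p x then F x else 0) l.
Proof. induction l; simpl; auto. destruct (p a); simpl; rewrite IHl; ring. Qed.

Lemma lsum_split F (p : A -> bool) l :
  lsum F l = lsum F (filter p l) + lsum F (filter (fun x => negb (p x)) l).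
Proof. induction l; simpl; [ring|]. destruct (p a); simpl; rewrite IHl; ring. Qed.

Lemma lsum_sum_f_R0 (G : nat -> A -> R) l K :
  lsum (fun x => sum_f_R0 (fun k => G k x) K) l = sum_f_R0 (fun k => lsum (G k) l) K.
Proof. induction K; simpl; auto. rewrite lsum_plus, IHK. reflexivity. Qed.

End ListSums.

Lemma lsum_map {A B} (F : B -> R) (g : A -> B) l : lsum F (map g l) = lsum (fun x => F (g x)) l.
Proof. induction l; simpl; auto. rewrite IHl. reflexivity. Qed.

Lemma lsum_comm {A B} (F : A -> B -> R) l1 l2 :
  lsum (fun x => lsum (F x) l2) l1 = lsum (fun y => lsum (fun x => F x y) l1) l2.
Proof. induction l1; simpl; [rewrite lsum_zero; auto|]. rewrite IHl1, <- lsum_plus. auto. Qed.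

Lemma lsum_mult {A B} (F : A -> R) (G : B -> R) l1 l2 :
  lsum F l1 * lsum G l2 = lsum (fun u => lsum (fun v => F u * G v) l2) l1.
Proof.
  rewrite Rmult_comm, <- lsum_scal. apply lsum_ext. intros.
  rewrite Rmult_comm, <- lsum_scal. reflexivity.
Qed.

Lemma sum_f_R0_ge_term (a : nat -> R) K k : (forall j, 0 <= a j) -> (k <= K)%nat ->
  a k <= sum_f_R0 a K.
Proof.
  intros Ha. induction K; intros Hk.
  - replace k with 0%nat by lia. simpl; lra.
  - destruct (Nat.eq_dec k (S K)) as [->|Hne].
    + simpl. pose proof (cond_pos_sum a K Ha). lra.
    + simpl. pose proof (Ha (S K)). specialize (IHK ltac:(lia)). lra.
Qed.

Fixpoint words (n : nat) : list (list bool) :=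
  match n with
  | O => [[]]
  | S n => map (cons false) (words n) ++ map (cons true) (words n)
  end.

Fixpoint words_upto (n : nat) : list (list bool) :=
  match n with O => words O | S n => words_upto n ++ words (S n) end.

Lemma length_words n w : In w (words n) -> length w = n.
Proof.
  revert w; induction n; simpl; intros w Hw.
  - destruct Hw as [<-|[]]; auto.
  - apply in_app_or in Hw as [Hw|Hw]; apply in_map_iff in Hw as [v [<- Hv]]; simpl; auto.
Qed.

Lemma in_words w : In w (words (length w)).
Proof.
  induction w as [|b w IHw]; simpl; auto.
  apply in_or_app. destruct b; [right|left]; apply in_map; auto.
Qed.

Lemma NoDup_words n : NoDup (words n).
Proof.
  induction n; simpl; [repeat constructor; auto|].
  apply NoDup_app.
  - apply NoDup_map_NoDup_ForallPairs; auto. intros x y _ _ H; injection H; auto.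
  - apply NoDup_map_NoDup_ForallPairs; auto. intros x y _ _ H; injection H; auto.
  - intros a H1 H2. apply in_map_iff in H1 as [v [<- _]].
    apply in_map_iff in H2 as [v' [H _]]. discriminate.
Qed.

Lemma length_words_upto n w : In w (words_upto n) -> (length w <= n)%nat.
Proof.
  induction n; simpl; intros Hw.
  - destruct Hw as [<-|[]]; simpl; lia.
  - apply in_app_or in Hw as [Hw|Hw]; [specialize (IHn Hw); lia|].
    apply (length_words (S n)) in Hw. lia.
Qed.

Lemma in_words_upto n w : (length w <= n)%nat -> In w (words_upto n).
Proof.
  induction n; intros Hw.
  - destruct w; simpl in *; auto; lia.
  - change (In w (words_upto n ++ words (S n))). apply in_or_app.
    destruct (Nat.eq_dec (length w) (S n)) as [<-|Hne].
    + right. apply in_words.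
    + left. apply IHn. lia.
Qed.

Lemma NoDup_words_upto n : NoDup (words_upto n).
Proof.
  induction n; [apply (NoDup_words 0)|].
  change (NoDup (words_upto n ++ words (S n))).
  apply NoDup_app; auto; [apply NoDup_words|].
  intros a H1 H2. apply length_words_upto in H1. apply (length_words (S n)) in H2. lia.
Qed.

Lemma lsum_words_S F n :
  lsum F (words (S n)) = lsum (fun w => F (false :: w) + F (true :: w)) (words n).
Proof. simpl. rewrite lsum_app, !lsum_map, lsum_plus. reflexivity. Qed.

Lemma lsum_words_add F k m :
  lsum F (words (k + m)) = lsum (fun u => lsum (fun v => F (u ++ v)) (words m)) (words k).
Proof.
  revert F; induction k; intros F.
  - simpl. rewrite Rplus_0_r. reflexivity.
  - change (S k + m)%nat with (S (k + m)).
    rewrite lsum_words_S, lsum_words_S, lsum_plus, !IHk, <- lsum_plus.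
    reflexivity.
Qed.

Fixpoint prefixb (u w : list bool) : bool :=
  match u, w with
  | [], _ => true
  | a :: u', b :: w' => Bool.eqb a b && prefixb u' w'
  | _ :: _, [] => false
  end.

Lemma prefixb_app u v : prefixb u (u ++ v) = true.
Proof. induction u; simpl; auto. rewrite Bool.eqb_reflx. auto. Qed.

Lemma prefixbP u w : prefixb u w = true -> exists v, w = u ++ v.
Proof.
  revert w; induction u as [|a u IHu]; simpl; intros w H; [eauto|].
  destruct w as [|b w]; [discriminate|].
  apply andb_prop in H as [H1 H2]. apply Bool.eqb_prop in H1 as ->.
  destruct (IHu w H2) as [v ->]. eauto.
Qed.

Lemma prefixb_app_r u w x : prefixb u w = true -> prefixb u (w ++ x) = true.
Proof. intros H. apply prefixbP in H as [v ->]. rewrite <- app_assoc. apply prefixb_app. Qed.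

Lemma prefixb_length u w : prefixb u w = true -> (length u <= length w)%nat.
Proof. intros H. apply prefixbP in H as [v ->]. rewrite length_app. lia. Qed.

Lemma lsum_words_prefixb F u N : (length u <= N)%nat ->
  lsum (fun w => if prefixb u w then F w else 0) (words N)
  = lsum (fun v => F (u ++ v)) (words (N - length u)).
Proof.
  revert F N; induction u as [|a u IHu]; intros F N HN.
  - simpl. rewrite Nat.sub_0_r. reflexivity.
  - destruct N as [|N]; simpl in HN; [lia|].
    rewrite lsum_words_S. simpl length. simpl Nat.sub.
    rewrite <- (IHu (fun w => F (a :: w))) by lia.
    apply lsum_ext. intros w _. destruct a; simpl; ring.
Qed.

Lemma lsum_words_le_cut F (C : list (list bool)) N :
  (forall w, 0 <= F w) ->
  (forall u, In u C -> (length u <= N)%nat) ->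
  (forall w, In w (words N) -> exists u, In u C /\ prefixb u w = true) ->
  lsum F (words N) <= lsum (fun u => lsum (fun v => F (u ++ v)) (words (N - length u))) C.
Proof.
  intros HF HC Hcut.
  apply Rle_trans with (lsum (fun w => lsum (fun u => if prefixb u w then F w else 0) C) (words N)).
  - apply lsum_le. intros w Hw. destruct (Hcut w Hw) as [u [Hu Hp]].
    rewrite <- lsum_filter.
    assert (Hin : In u (filter (fun u => prefixb u w) C)) by (apply filter_In; auto).
    destruct (in_split _ _ Hin) as [l1 [l2 ->]].
    rewrite lsum_app. simpl.
    pose proof (lsum_nonneg (fun _ => F w) l1 (fun _ _ => HF w)).
    pose proof (lsum_nonneg (fun _ => F w) l2 (fun _ _ => HF w)). lra.
  - rewrite lsum_comm. apply lsum_le. intros u Hu. rewrite lsum_words_prefixb by auto. lra.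
Qed.

Lemma transfer_cyl_children s h w x : 0 <= x ->
  Rpower (cyl_deriv (false :: w) x) s * h (cyl_map (false :: w) x)
  + Rpower (cyl_deriv (true :: w) x) s * h (cyl_map (true :: w) x)
  = Rpower (cyl_deriv w x) s * transfer s h (cyl_map w x).
Proof.
  intros Hx. unfold transfer. simpl.
  rewrite <- !(Rpower_mult_distr (dT _ _));
    auto using dT_pos, cyl_deriv_pos, cyl_map_ge0.
  ring.
Qed.

Lemma transfer_iter_ge s h :
  (forall y, 0 <= y <= 1 -> h y <= transfer s h y) ->
  forall n x, 0 <= x <= 1 ->
  h x <= lsum (fun w => Rpower (cyl_deriv w x) s * h (cyl_map w x)) (words n).
Proof.
  intros Hh n. induction n; intros x Hx.
  - simpl. rewrite Rpower_base_1. lra.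
  - rewrite lsum_words_S. eapply Rle_trans; [apply (IHn x Hx)|].
    apply lsum_le. intros w _. rewrite transfer_cyl_children by lra.
    apply Rmult_le_compat_l; [left; apply Rpower_pos|]. apply Hh, cyl_map_unit, Hx.
Qed.

Lemma transfer_iter_le s h k : 0 <= k ->
  (forall y, 0 <= y <= 1 -> transfer s h y <= k * h y) ->
  forall n x, 0 <= x <= 1 ->
  lsum (fun w => Rpower (cyl_deriv w x) s * h (cyl_map w x)) (words n) <= k ^ n * h x.
Proof.
  intros Hk Hh n. induction n; intros x Hx.
  - simpl. rewrite Rpower_base_1. lra.
  - rewrite lsum_words_S.
    apply Rle_trans with (lsum (fun w => k * (Rpower (cyl_deriv w x) s * h (cyl_map w x))) (words n)).
    + apply lsum_le. intros w _. rewrite transfer_cyl_children by lra.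
      pose proof (Hh _ (cyl_map_unit w x Hx)). pose proof (Rpower_pos (cyl_deriv w x) s). nra.
    + change (k ^ S n) with (k * k ^ n).
      rewrite lsum_scal, Rmult_assoc. apply Rmult_le_compat_l; auto.
Qed.

Definition partition_sum (s : R) (n : nat) : R :=
  lsum (fun w => Rpower (cyl_deriv w 0) s) (words n).

Lemma partition_sum_pos s n : 0 < partition_sum s n.
Proof.
  apply (lsum_pos _ _ (repeat false n)); [|intros; apply Rpower_pos].
  pose proof (in_words (repeat false n)). rewrite repeat_length in H. exact H.
Qed.

Lemma partition_sum_ge s h M :
  (forall y, 0 <= y <= 1 -> h y <= transfer s h y) ->
  (forall y, 0 <= y <= 1 -> 0 < h y <= M) ->
  forall n, h 0 / M <= partition_sum s n.
Proof.
  intros Hs Hb n. pose proof (transfer_iter_ge s h Hs n 0 ltac:(lra)) as Hit.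
  assert (HM : 0 < M) by (destruct (Hb 0); lra).
  apply (Rmult_le_reg_r M); auto. unfold Rdiv. rewrite Rmult_assoc, Rinv_l, Rmult_1_r by lra.
  eapply Rle_trans; [apply Hit|]. unfold partition_sum.
  rewrite Rmult_comm, <- lsum_scal. apply lsum_le. intros w _.
  pose proof (Hb _ (cyl_map_unit w 0 ltac:(lra))). pose proof (Rpower_pos (cyl_deriv w 0) s). nra.
Qed.

Lemma partition_sum_le s h k m : 0 <= k -> 0 < m ->
  (forall y, 0 <= y <= 1 -> transfer s h y <= k * h y) ->
  (forall y, 0 <= y <= 1 -> m <= h y) ->
  forall n, partition_sum s n <= k ^ n * h 0 / m.
Proof.
  intros Hk Hm Hs Hb n. pose proof (transfer_iter_le s h k Hk Hs n 0 ltac:(lra)) as Hit.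
  unfold Rdiv. apply (Rmult_le_reg_r m); auto. rewrite Rmult_assoc, Rinv_l, Rmult_1_r by lra.
  eapply Rle_trans; [|apply Hit]. unfold partition_sum.
  rewrite Rmult_comm, <- lsum_scal. apply lsum_le. intros w _.
  pose proof (Hb _ (cyl_map_unit w 0 ltac:(lra))). pose proof (Rpower_pos (cyl_deriv w 0) s). nra.
Qed.

Lemma partition_sum_supermult s k m : 0 <= s ->
  partition_sum s k * partition_sum s m <= Rpower (exp 1) s * partition_sum s (k + m).
Proof.
  intros Hs. unfold partition_sum. rewrite lsum_words_add, lsum_mult, <- lsum_scal.
  apply lsum_le. intros u _. rewrite <- lsum_scal. apply lsum_le. intros v _.
  destruct (cyl_deriv_app_bounds u v) as [Hlow _].
  pose proof (cyl_deriv_pos u 0 ltac:(lra)). pose proof (cyl_deriv_pos v 0 ltac:(lra)).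
  rewrite !Rpower_mult_distr by (auto using exp_pos, cyl_deriv_pos with real).
  apply Rle_Rpower_l; auto. split; [nra|exact Hlow].
Qed.

Lemma lsum_extensions_le s u m : 0 <= s ->
  lsum (fun v => Rpower (cyl_deriv (u ++ v) 0) s) (words m)
  <= Rpower (exp 1) s * Rpower (cyl_deriv u 0) s * partition_sum s m.
Proof.
  intros Hs. unfold partition_sum. rewrite <- lsum_scal. apply lsum_le. intros v _.
  destruct (cyl_deriv_app_bounds u v) as [_ Hup].
  pose proof (cyl_deriv_pos u 0 ltac:(lra)). pose proof (cyl_deriv_pos v 0 ltac:(lra)).
  rewrite !Rpower_mult_distr by (auto using exp_pos, cyl_deriv_pos, Rmult_lt_0_compat with real).
  apply Rle_Rpower_l; auto. split; [apply cyl_deriv_pos; lra|]. lra.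
Qed.

(* Supermultiplicativity of the partition sums transfers their lower bound to any cut set. *)
Lemma partition_sum_cut s c0 (C : list (list bool)) N : 0 <= s -> 0 < c0 ->
  (forall n, c0 <= partition_sum s n) ->
  (forall u, In u C -> (length u <= N)%nat) ->
  (forall w, In w (words N) -> exists u, In u C /\ prefixb u w = true) ->
  c0 <= Rpower (exp 1) s * Rpower (exp 1) s * lsum (fun u => Rpower (cyl_deriv u 0) s) C.
Proof.
  intros Hs Hc0 Hlow HC Hcut.
  set (D := Rpower (exp 1) s). assert (HD : 0 < D) by apply Rpower_pos.
  set (S := lsum (fun u => Rpower (cyl_deriv u 0) s) C).
  pose proof (partition_sum_pos s N) as HZ.
  assert (Hext : forall u, In u C ->
    lsum (fun v => Rpower (cyl_deriv (u ++ v) 0) s) (words (N - length u))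
    <= Rpower (cyl_deriv u 0) s * (D * D * partition_sum s N / c0)).
  { intros u Hu. eapply Rle_trans; [apply lsum_extensions_le; auto|]. fold D.
    pose proof (partition_sum_supermult s (length u) (N - length u) Hs) as Hsup.
    replace (length u + (N - length u))%nat with N in Hsup by (specialize (HC u Hu); lia).
    pose proof (Hlow (length u)). pose proof (partition_sum_pos s (N - length u)).
    pose proof (Rpower_pos (cyl_deriv u 0) s).
    replace (D * Rpower (cyl_deriv u 0) s * partition_sum s (N - length u))
      with (Rpower (cyl_deriv u 0) s * (D * partition_sum s (N - length u))) by ring.
    apply Rmult_le_compat_l; [lra|].
    apply (Rmult_le_reg_r c0); auto.
    replace (D * D * partition_sum s N / c0 * c0) with (D * (D * partition_sum s N)) by (field; lra).
    rewrite Rmult_assoc. apply Rmult_le_compat_l; [lra|]. fold D in Hsup. nra. }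
  assert (HZS : partition_sum s N <= partition_sum s N * (D * D * S / c0)).
  { eapply Rle_trans; [apply lsum_words_le_cut; eauto; intros; left; apply Rpower_pos|].
    eapply Rle_trans; [apply lsum_le, Hext|].
    replace (partition_sum s N * (D * D * S / c0)) with (D * D * partition_sum s N / c0 * S)
      by (field; lra).
    unfold S. rewrite <- lsum_scal. right. apply lsum_ext. intros. ring. }
  assert (1 <= D * D * S / c0) by (apply (Rmult_le_reg_l (partition_sum s N)); lra).
  apply (Rmult_le_reg_r (/ c0)); [apply Rinv_0_lt_compat; lra|].
  rewrite Rinv_r by lra. exact H.
Qed.

Lemma lsum_disjoint_intervals {A} (a b : A -> R) : forall n (l : list A) p q,
  (length l <= n)%nat -> NoDup l ->
  (forall x, In x l -> p <= a x /\ a x <= b x /\ b x <= q) ->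
  (forall x y, In x l -> In y l -> x <> y -> b x < a y \/ b y < a x) ->
  p <= q -> lsum (fun x => b x - a x) l <= q - p.
Proof.
  induction n as [|n IHn]; intros l p q Hn Hnd Hin Hdisj Hpq.
  { destruct l; simpl in *; [lra|lia]. }
  destruct l as [|x l]; simpl; [lra|].
  inversion Hnd as [|? ? Hx Hnd']; subst.
  destruct (Hin x (or_introl eq_refl)) as [Hx1 [Hx2 Hx3]].
  set (left := fun y => if Rlt_dec (b y) (a x) then true else false).
  rewrite (lsum_split _ left l).
  pose proof (filter_length left l). simpl in Hn.
  assert (Hsub : forall f, (forall y1 y2, In y1 (filter f l) -> In y2 (filter f l) -> y1 <> y2 ->
      b y1 < a y2 \/ b y2 < a y1)).
  { intros f y1 y2 Hy1 Hy2 Hne. apply filter_In in Hy1 as [Hy1 _].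
    apply filter_In in Hy2 as [Hy2 _]. apply Hdisj; simpl; auto. }
  assert (HL : lsum (fun y => b y - a y) (filter left l) <= a x - p).
  { apply IHn; [lia|apply NoDup_filter; auto| |apply Hsub|lra].
    intros y Hy. apply filter_In in Hy as [Hy Hf]. unfold left in Hf.
    destruct (Rlt_dec (b y) (a x)); [|discriminate].
    destruct (Hin y (or_intror Hy)) as [? [? ?]]. lra. }
  assert (HR : lsum (fun y => b y - a y) (filter (fun y => negb (left y)) l) <= q - b x).
  { apply IHn; [lia|apply NoDup_filter; auto| |apply Hsub|lra].
    intros y Hy. apply filter_In in Hy as [Hy Hf]. unfold left in Hf.
    destruct (Rlt_dec (b y) (a x)); [discriminate|].
    destruct (Hin y (or_intror Hy)) as [? [? ?]].
    assert (Hne : x <> y) by (intros ->; contradiction).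
    destruct (Hdisj x y (or_introl eq_refl) (or_intror Hy) Hne); lra. }
  lra.
Qed.

Lemma incomparable_words (u v : list bool) :
  (forall x, v <> u ++ x) -> (forall x, u <> v ++ x) ->
  exists p b u' v', u = p ++ b :: u' /\ v = p ++ negb b :: v'.
Proof.
  revert v. induction u as [|a u IH]; intros v H1 H2.
  - exfalso. apply (H1 v). reflexivity.
  - destruct v as [|c v]; [exfalso; apply (H2 (a :: u)); reflexivity|].
    destruct (Bool.bool_dec a c) as [<-|Hac].
    + destruct (IH v) as [p [b [u' [v' [-> ->]]]]].
      * intros x Hx. apply (H1 x). simpl. rewrite Hx. reflexivity.
      * intros x Hx. apply (H2 x). simpl. rewrite Hx. reflexivity.
      * exists (a :: p), b, u', v'. auto.
    + exists [], a, u, v. split; auto. destruct a, c; simpl; congruence.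
Qed.

(* The two branches are separated by the gap [(T_1 1, T_3 0)] = [(sqrt 2 - 1, sqrt 3 - 1)]. *)
Lemma cyl_branches_separated p u v :
  cyl_map (p ++ false :: u) 1 < cyl_map (p ++ true :: v) 0.
Proof.
  rewrite !cyl_map_app. apply Rle_lt_trans with (cyl_map p (T 1 1)).
  - apply cyl_map_le; [apply (T_ge0 false), cyl_map_ge0; lra|].
    apply (T_le false); [apply cyl_map_ge0; lra|apply cyl_map_unit; lra].
  - apply Rlt_le_trans with (cyl_map p (T 3 0)).
    + apply cyl_map_lt; [apply (T_ge0 false); lra|]. unfold T.
      assert (sqrt (1 + 1) < sqrt (3 + 0)) by (apply sqrt_lt_1_alt; lra). lra.
    + apply cyl_map_le; [apply (T_ge0 true); lra|].
      apply (T_le true); [lra|apply cyl_map_ge0; lra].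
Qed.

Lemma cyl_incomparable_disjoint u v :
  (forall x, v <> u ++ x) -> (forall x, u <> v ++ x) ->
  cyl_map u 1 < cyl_map v 0 \/ cyl_map v 1 < cyl_map u 0.
Proof.
  intros H1 H2. destruct (incomparable_words u v H1 H2) as [p [b [u' [v' [-> ->]]]]].
  destruct b; [right|left]; apply cyl_branches_separated.
Qed.

Definition classicb (P : Prop) : bool := if excluded_middle_informative P then true else false.

Lemma classicb_true P : classicb P = true -> P.
Proof. unfold classicb. destruct (excluded_middle_informative P); auto; discriminate. Qed.

Lemma classicb_eq_true P : P -> classicb P = true.
Proof. unfold classicb. destruct (excluded_middle_informative P); auto; contradiction. Qed.

Definition stopping_word (r : R) (U : R -> Prop) (u : list bool) : Prop :=
  exists u' b, u = u' ++ [b] /\ cyl_len u <= r /\ r < cyl_len u' /\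
    exists y, U y /\ cyl_map u 0 <= y <= cyl_map u 1.

Lemma stopping_word_antichain r U u x :
  stopping_word r U u -> stopping_word r U (u ++ x) -> x = [].
Proof.
  intros [u1 [b1 [E1 [L1 [R1 _]]]]] [u2 [b2 [E2 [L2 [R2 _]]]]].
  destruct x as [|c x]; auto. exfalso.
  destruct (exists_last (l := c :: x)) as [x' [c' Ex]]; [discriminate|].
  rewrite Ex, app_assoc in E2. apply app_inj_tail in E2 as [E2 _].
  pose proof (cyl_len_app_le u x'). rewrite <- E2 in R2. lra.
Qed.

Lemma stopping_word_disjoint r U u v :
  stopping_word r U u -> stopping_word r U v -> u <> v ->
  cyl_map u 1 < cyl_map v 0 \/ cyl_map v 1 < cyl_map u 0.
Proof.
  intros Hu Hv Hne. apply cyl_incomparable_disjoint.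
  - intros x ->. apply Hne. rewrite (stopping_word_antichain r U u x Hu Hv), app_nil_r. auto.
  - intros x ->. apply Hne. rewrite (stopping_word_antichain r U v x Hv Hu), app_nil_r. auto.
Qed.

(* Stopping words have length comparable to [r] and disjoint cylinders inside the
   [2r]-neighbourhood of [U], so there are at most [16 e] of them. *)
Lemma lsum_stopping_words_le r U l z s : 0 < r -> 0 <= s -> NoDup l -> U z ->
  (forall y1 y2, U y1 -> U y2 -> Rabs (y1 - y2) <= r) ->
  lsum (fun u => Rpower (cyl_deriv u 0) s) (filter (fun u => classicb (stopping_word r U u)) l)
  <= 16 * exp 1 * Rpower (exp 1 * r) s.
Proof.
  intros Hr Hs Hnd Hz HU. pose proof (exp_pos 1) as He.
  set (L := filter (fun u => classicb (stopping_word r U u)) l).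
  assert (HL : forall u, In u L -> stopping_word r U u)
    by (intros u Hu; apply filter_In in Hu as [_ Hu]; apply classicb_true; auto).
  assert (Hlen : forall u, In u L -> r / (4 * exp 1) <= cyl_len u <= r).
  { intros u Hu. destruct (HL u Hu) as [u' [b [-> [L1 [R1 _]]]]]. split; auto.
    pose proof (cyl_len_snoc u' b). apply (Rmult_le_reg_l (4 * exp 1)); [lra|].
    field_simplify; lra. }
  assert (Htotal : lsum cyl_len L <= (z + 2 * r) - (z - 2 * r)).
  { apply (lsum_disjoint_intervals (fun u => cyl_map u 0) (fun u => cyl_map u 1) (length L));
      [lia|apply NoDup_filter; auto| | |lra].
    - intros u Hu. destruct (Hlen u Hu) as [_ Hl].
      destruct (HL u Hu) as [u' [b [_ [_ [_ [y [Uy Hy]]]]]]].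
      pose proof (HU y z Uy Hz) as Hyz. apply Rabs_le_between in Hyz.
      unfold cyl_len in Hl. lra.
    - intros u v Hu Hv Hne. apply stopping_word_disjoint with r U; auto. }
  assert (Hcount : INR (length L) * (r / (4 * exp 1)) <= 4 * r).
  { rewrite <- lsum_const. eapply Rle_trans; [apply lsum_le|].
    - intros u Hu. apply (Hlen u Hu).
    - lra. }
  eapply Rle_trans; [apply (lsum_le _ (fun _ => Rpower (exp 1 * r) s))|].
  - intros u Hu. apply Rle_Rpower_l; auto. split; [apply cyl_deriv_pos; lra|].
    pose proof (cyl_len_ge u). destruct (Hlen u Hu). nra.
  - rewrite lsum_const. apply Rmult_le_compat_r; [left; apply Rpower_pos|].
    apply (Rmult_le_reg_r (r / (4 * exp 1))); [apply Rdiv_lt_0_compat; lra|].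
    replace (16 * exp 1 * (r / (4 * exp 1))) with (4 * r) by (field; lra). exact Hcount.
Qed.

Fixpoint prefix_word (p : nat -> bool) (n : nat) : list bool :=
  match n with O => [] | S n => prefix_word p n ++ [p n] end.

Lemma length_prefix_word p n : length (prefix_word p n) = n.
Proof. induction n; simpl; auto. rewrite length_app, IHn. simpl. lia. Qed.

Lemma comp_prefix_word p n x : Defs.comp (fun k => digit (p k)) n x = cyl_map (prefix_word p n) x.
Proof. revert x; induction n; intros x; simpl; auto. rewrite IHn, cyl_map_app. reflexivity. Qed.

Lemma prefix_word_le p n m : (n <= m)%nat -> exists x, prefix_word p m = prefix_word p n ++ x.
Proof.
  induction m; intros Hnm.
  - replace n with 0%nat by lia. exists []. reflexivity.
  - destruct (Nat.eq_dec n (S m)) as [->|Hne]; [exists []; rewrite app_nil_r; auto|].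
    destruct IHm as [x Hx]; [lia|]. exists (x ++ [p m]). simpl. rewrite Hx, app_assoc. auto.
Qed.

Lemma cyl_prefix_nested p n m : (n <= m)%nat ->
  cyl_map (prefix_word p n) 0 <= cyl_map (prefix_word p m) 0 <= cyl_map (prefix_word p n) 1.
Proof.
  intros Hnm. destruct (prefix_word_le p n m Hnm) as [x ->]. rewrite cyl_map_app.
  pose proof (cyl_map_unit x 0 ltac:(lra)). split; apply cyl_map_le; lra.
Qed.

Lemma exp1_half_pow_small eps : 0 < eps -> exists N, forall n, (N <= n)%nat -> exp 1 * (/ 2) ^ n < eps.
Proof.
  intros Heps. pose proof (exp_pos 1).
  destruct (pow_lt_1_zero (/ 2) ltac:(rewrite Rabs_right; lra) (eps / exp 1)) as [N HN].
  { apply Rdiv_lt_0_compat; auto. }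
  exists N. intros n Hn. specialize (HN n Hn). rewrite Rabs_right in HN by (left; apply pow_lt; lra).
  apply (Rmult_lt_compat_l (exp 1)) in HN; auto.
  replace (exp 1 * (eps / exp 1)) with eps in HN by (field; lra). exact HN.
Qed.

Lemma cyl_point_exists p : exists y : R, is_lim_seq (fun n => cyl_map (prefix_word p n) 0) y.
Proof.
  assert (Hcv : ex_finite_lim_seq (fun n => cyl_map (prefix_word p n) 0)).
  { apply ex_lim_seq_cauchy_corr. intros eps.
    destruct (exp1_half_pow_small eps (cond_pos eps)) as [N HN].
    exists N. intros n m Hn Hm.
    pose proof (cyl_prefix_nested p N n Hn). pose proof (cyl_prefix_nested p N m Hm).
    pose proof (cyl_len_le_pow (prefix_word p N)) as Hlen.
    rewrite length_prefix_word in Hlen. specialize (HN N (le_n N)).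
    unfold cyl_len in Hlen. apply Rabs_def1; lra. }
  destruct Hcv as [y Hy]. exists y. exact Hy.
Qed.

Lemma cyl_point_in_cyl p (y : R) : is_lim_seq (fun n => cyl_map (prefix_word p n) 0) y ->
  forall n, cyl_map (prefix_word p n) 0 <= y <= cyl_map (prefix_word p n) 1.
Proof.
  intros Hy n. split.
  - apply (is_lim_seq_le_loc (fun _ => cyl_map (prefix_word p n) 0)
      (fun m => cyl_map (prefix_word p m) 0) (Finite _) (Finite _)); [|apply is_lim_seq_const|auto].
    exists n. intros m Hm. apply cyl_prefix_nested. lia.
  - apply (is_lim_seq_le_loc (fun m => cyl_map (prefix_word p m) 0)
      (fun _ => cyl_map (prefix_word p n) 1) (Finite _) (Finite _)); [|auto|apply is_lim_seq_const].
    exists n. intros m Hm. apply cyl_prefix_nested. lia.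
Qed.

Lemma E_set_point p : exists y : R, E_set y /\
  forall n, cyl_map (prefix_word p n) 0 <= y <= cyl_map (prefix_word p n) 1.
Proof.
  destruct (cyl_point_exists p) as [y Hy]. exists y. split; [|apply cyl_point_in_cyl; auto].
  exists (fun k => digit (p k)). split; [intros k; destruct (p k); simpl; auto|].
  eapply is_lim_seq_ext; [|apply Hy]. intros n. simpl. rewrite comp_prefix_word. reflexivity.
Qed.

Lemma E_set_digits (y : R) : E_set y -> exists p, is_lim_seq (fun n => cyl_map (prefix_word p n) 0) y.
Proof.
  intros [a [Ha Hl]]. exists (fun k => classicb (a k = 3)).
  assert (Hd : forall k, a k = digit (classicb (a k = 3))).
  { intros k. unfold classicb. destruct (excluded_middle_informative (a k = 3)); simpl; auto.
    destruct (Ha k); auto; contradiction. }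
  eapply is_lim_seq_ext; [|apply Hl]. intros n. simpl. rewrite <- comp_prefix_word.
  generalize 0. induction n; intros x; simpl; auto. rewrite IHn, <- Hd. reflexivity.
Qed.

Section Konig.
Variable good : list bool -> Prop.

Definition avoids_good (w : list bool) : Prop := forall u, prefixb u w = true -> ~ good u.
Definition extends_avoiding (u : list bool) : Prop :=
  forall m, exists v, length v = m /\ avoids_good (u ++ v).

Lemma avoids_good_app w x : avoids_good (w ++ x) -> avoids_good w.
Proof. intros H u Hu. apply H, prefixb_app_r, Hu. Qed.

Lemma extends_avoiding_child u :
  extends_avoiding u -> extends_avoiding (u ++ [false]) \/ extends_avoiding (u ++ [true]).
Proof.
  intros H. apply NNPP. intros Hno. apply not_or_and in Hno as [H0 H1].
  apply not_all_ex_not in H0 as [m0 H0]. apply not_all_ex_not in H1 as [m1 H1].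
  destruct (H (S (max m0 m1))) as [[|c v] [Hv HB]]; [discriminate|].
  simpl in Hv. injection Hv as Hv.
  assert (Htrunc : forall m, (m <= length v)%nat ->
    exists v', length v' = m /\ avoids_good ((u ++ [c]) ++ v')).
  { intros m Hm. exists (firstn m v). split; [rewrite length_firstn; lia|].
    apply (avoids_good_app _ (skipn m v)). rewrite <- !app_assoc. simpl.
    rewrite firstn_skipn. exact HB. }
  destruct c; [apply H1|apply H0]; apply Htrunc; lia.
Qed.

Definition next_digit (u : list bool) : bool :=
  negb (classicb (extends_avoiding (u ++ [false]))).

Fixpoint avoiding_path (n : nat) : list bool :=
  match n with O => [] | S n => avoiding_path n ++ [next_digit (avoiding_path n)] end.

Lemma avoiding_path_extends : extends_avoiding [] -> forall n, extends_avoiding (avoiding_path n).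
Proof.
  intros H0 n. induction n; simpl; auto. unfold next_digit.
  destruct (classicb (extends_avoiding (avoiding_path n ++ [false]))) eqn:E; simpl.
  - apply classicb_true, E.
  - destruct (extends_avoiding_child _ IHn) as [Hf|Ht]; auto.
    rewrite classicb_eq_true in E by exact Hf. discriminate.
Qed.

Lemma konig_uniform_bar : (forall p, exists n, good (prefix_word p n)) ->
  exists N, forall w, length w = N -> exists u, prefixb u w = true /\ good u.
Proof.
  intros Hbar. apply NNPP. intros Hn.
  assert (Hroot : extends_avoiding []).
  { intros m. apply NNPP. intros Hm. apply Hn. exists m. intros w Hw. apply NNPP. intros Hw'.
    apply Hm. exists w. split; auto. intros u Hu Hg. apply Hw'. eauto. }
  set (p := fun k => next_digit (avoiding_path k)).
  assert (Hp : forall n, prefix_word p n = avoiding_path n)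
    by (induction n; simpl; auto; rewrite IHn; auto).
  destruct (Hbar p) as [n Hg]. rewrite Hp in Hg.
  destruct (avoiding_path_extends Hroot n 0%nat) as [[|c v] [Hlen Hav]]; [|discriminate Hlen].
  rewrite app_nil_r in Hav. apply (Hav (avoiding_path n)); auto.
  rewrite <- (app_nil_r (avoiding_path n)) at 2. apply prefixb_app.
Qed.

End Konig.

Lemma bar_bounded_index (Q : nat -> list bool -> Prop) (l : list (list bool)) :
  (forall w, In w l -> exists u, prefixb u w = true /\ exists k, Q k u) ->
  exists K, forall w, In w l -> exists u, prefixb u w = true /\ exists k, (k <= K)%nat /\ Q k u.
Proof.
  induction l as [|a l IHl]; intros H; [exists 0%nat; intros w []|].
  destruct IHl as [K HK]; [intros; apply H; simpl; auto|].
  destruct (H a (or_introl eq_refl)) as [u [Hu [k Hk]]].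
  exists (max K k). intros w [<-|Hw].
  - exists u. split; auto. exists k. split; auto. lia.
  - destruct (HK w Hw) as [u' [Hu' [k' [Hk' Q']]]]. exists u'. split; auto.
    exists k'. split; auto. lia.
Qed.

Lemma diam_ge_dist (U : R -> Prop) x y : U x -> U y -> Rbar_le (Rabs (x - y)) (diam U).
Proof.
  intros Hx Hy. unfold diam.
  destruct (Lub_Rbar_correct (fun r => exists x y, U x /\ U y /\ r = Rabs (x - y))) as [Hub _].
  apply Hub. exists x, y. auto.
Qed.

Lemma diam_le_bound s (U : R -> Prop) L : 0 <= s -> 0 < L ->
  (forall y1 y2, U y1 -> U y2 -> Rabs (y1 - y2) <= L) ->
  Rbar_le (diam U) L /\ diam_pow s U <= Rpower L s.
Proof.
  intros Hs HL HU.
  assert (Hd : Rbar_le (diam U) L).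
  { unfold diam.
    destruct (Lub_Rbar_correct (fun r => exists x y, U x /\ U y /\ r = Rabs (x - y))) as [_ Hlub].
    apply Hlub. intros r [x [y [Hx [Hy ->]]]]. simpl. auto. }
  split; auto. unfold diam_pow. destruct (diam U) as [d| |]; simpl in Hd; try contradiction.
  - destruct (Rlt_dec 0 d) as [Hd0|]; [apply Rle_Rpower_l; auto | left; apply Rpower_pos].
  - left; apply Rpower_pos.
Qed.

Lemma diam_pow_empty s (U : R -> Prop) : (forall y, ~ U y) -> diam_pow s U = 0.
Proof.
  intros HU. unfold diam_pow.
  replace (diam U) with m_infty; auto. symmetry. unfold diam. apply is_lub_Rbar_unique. split.
  - intros r [x [y [Hx _]]]. exfalso. apply (HU x Hx).
  - intros b _. destruct b; simpl; auto.
Qed.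

Lemma diam_finite (U : R -> Prop) z (d0 : R) : U z -> Rbar_le (diam U) d0 ->
  exists d, diam U = Finite d /\ 0 <= d <= d0 /\
    forall y1 y2, U y1 -> U y2 -> Rabs (y1 - y2) <= d.
Proof.
  intros Hz Hd. pose proof (diam_ge_dist U z z Hz Hz) as H0.
  destruct (diam U) as [d| |] eqn:E; simpl in *; try contradiction.
  rewrite Rminus_diag, Rabs_R0 in H0. exists d. split; auto. split; [lra|].
  intros y1 y2 H1 H2. pose proof (diam_ge_dist U y1 y2 H1 H2) as H. rewrite E in H. exact H.
Qed.

Lemma diam_pow_nonneg s U : 0 <= diam_pow s U.
Proof.
  unfold diam_pow. destruct (diam U) as [d| |]; try lra.
  destruct (Rlt_dec 0 d); [left; apply Rpower_pos|lra].
Qed.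

Lemma diam_pow_finite s U d : diam U = Finite d -> 0 < d -> diam_pow s U = Rpower d s.
Proof. intros E H. unfold diam_pow. rewrite E. destruct (Rlt_dec 0 d); auto; lra. Qed.

Definition clamp01 (y : R) : R := Rmax 0 (Rmin 1 y).

Lemma cont_on01_bounds h : cont_on01 h -> (forall x, 0 <= x <= 1 -> 0 < h x) ->
  exists m M, 0 < m /\ forall x, 0 <= x <= 1 -> m <= h x <= M.
Proof.
  intros Hh Hpos.
  assert (Hid : forall y, 0 <= y <= 1 -> clamp01 y = y).
  { intros y Hy. unfold clamp01. rewrite Rmin_right, Rmax_right; lra. }
  assert (Hunit : forall y, 0 <= clamp01 y <= 1)
    by (intros y; unfold clamp01, Rmax, Rmin; repeat destruct Rle_dec; lra).
  assert (Hcont : forall c, 0 <= c <= 1 -> continuity_pt (fun y => h (clamp01 y)) c).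
  { intros c Hc. apply continuity_pt_filterlim. rewrite (Hid c Hc).
    eapply filterlim_comp; [|apply (Hh c Hc)].
    intros P [eps HP]. exists eps. intros y Hy. apply HP; [|apply Hunit].
    assert (Rabs (clamp01 y - c) <= Rabs (y - c)).
    { unfold clamp01, Rmax, Rmin, Rabs. repeat destruct Rle_dec; repeat destruct Rcase_abs; lra. }
    unfold ball in *; simpl in *; unfold AbsRing_ball, abs, minus, plus, opp in *; simpl in *.
    unfold Rminus in *. lra. }
  destruct (continuity_ab_maj (fun y => h (clamp01 y)) 0 1 ltac:(lra) Hcont) as [xM [HM HxM]].
  destruct (continuity_ab_min (fun y => h (clamp01 y)) 0 1 ltac:(lra) Hcont) as [xm [Hm Hxm]].
  exists (h xm), (h xM). split; [apply Hpos; auto|].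
  intros x Hx. specialize (HM x Hx). specialize (Hm x Hx). rewrite !Hid in * by auto. lra.
Qed.

Definition level_cover (n j : nat) (y : R) : Prop :=
  exists w, nth_error (words n) j = Some w /\ cyl_map w 0 <= y <= cyl_map w 1.

Lemma level_cover_E_set n y : E_set y -> exists j, level_cover n j y.
Proof.
  intros Hy. destruct (E_set_digits y Hy) as [p Hp].
  pose proof (cyl_point_in_cyl p y Hp n) as Hin.
  pose proof (in_words (prefix_word p n)) as Hw. rewrite length_prefix_word in Hw.
  destruct (In_nth_error _ _ Hw) as [j Hj]. exists j, (prefix_word p n). auto.
Qed.

Lemma level_cover_diam s n j w : 0 <= s -> nth_error (words n) j = Some w ->
  Rbar_le (diam (level_cover n j)) (cyl_len w) /\ diam_pow s (level_cover n j) <= Rpower (cyl_len w) s.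
Proof.
  intros Hs Hj. apply diam_le_bound; auto using cyl_len_pos.
  intros y1 y2 [w1 [E1 H1]] [w2 [E2 H2]]. rewrite Hj in E1, E2.
  injection E1 as <-. injection E2 as <-. unfold cyl_len. apply Rabs_le. lra.
Qed.

Lemma level_cover_out n j : nth_error (words n) j = None -> forall y, ~ level_cover n j y.
Proof. intros Hj y [w [E _]]. congruence. Qed.

Lemma sum_f_R0_le_lsum_nth {A} (l : list A) (F : A -> R) (G : nat -> R) :
  (forall x, 0 <= F x) ->
  (forall j, G j <= match nth_error l j with Some w => F w | None => 0 end) ->
  forall N, sum_f_R0 G N <= lsum F l.
Proof.
  intros HF. revert G. induction l as [|x l IH]; intros G HG N.
  - apply Rle_trans with (sum_f_R0 (fun _ => 0) N).
    + apply sum_Rle. intros j _. specialize (HG j). destruct j; exact HG.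
    + rewrite sum_cte. simpl. lra.
  - simpl. destruct N as [|N].
    + specialize (HG 0%nat). simpl in *. pose proof (lsum_nonneg F l (fun x _ => HF x)). lra.
    + rewrite decomp_sum by lia. simpl pred.
      specialize (IH (fun i => G (S i)) (fun j => HG (S j)) N). specialize (HG 0%nat). simpl in HG.
      lra.
Qed.

Lemma level_cover_sum s n : 0 <= s -> forall N,
  sum_n (fun j => diam_pow s (level_cover n j)) N <= Rpower (exp 1) s * partition_sum s n.
Proof.
  intros Hs N. rewrite sum_n_Reals. unfold partition_sum. rewrite <- lsum_scal.
  apply Rle_trans with (lsum (fun w => Rpower (cyl_len w) s) (words n)).
  - apply sum_f_R0_le_lsum_nth; [intros; left; apply Rpower_pos|].
    intros j. destruct (nth_error (words n) j) as [w|] eqn:E.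
    + apply (level_cover_diam s n j w Hs E).
    + rewrite diam_pow_empty by apply (level_cover_out n j E). lra.
  - apply lsum_le. intros w _. rewrite Rpower_mult_distr by auto using exp_pos, cyl_deriv_pos with real.
    apply Rle_Rpower_l; auto. split; [apply cyl_len_pos|apply cyl_len_le].
Qed.

Lemma hausdorff_null_of_partition_sum_vanish s : 0 <= s ->
  (forall eps, 0 < eps -> exists n0, forall n, (n0 <= n)%nat -> partition_sum s n <= eps) ->
  hausdorff_null s E_set.
Proof.
  intros Hs Hvan delta eps Hdelta Heps.
  set (D := Rpower (exp 1) s). assert (HD : 0 < D) by apply Rpower_pos.
  destruct (exp1_half_pow_small delta Hdelta) as [N1 HN1].
  destruct (Hvan (eps / D) ltac:(apply Rdiv_lt_0_compat; lra)) as [N2 HN2].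
  set (n := max N1 N2).
  exists (level_cover n). split; [|split].
  - intros y Hy. apply level_cover_E_set, Hy.
  - intros j. destruct (nth_error (words n) j) as [w|] eqn:E.
    + apply Rbar_le_trans with (cyl_len w); [apply (level_cover_diam s n j w Hs E)|].
      pose proof (cyl_len_le_pow w) as Hw.
      rewrite (length_words n w) in Hw by (eapply nth_error_In; eauto).
      specialize (HN1 n ltac:(lia)). simpl. lra.
    + apply (diam_le_bound 0 _ delta); try lra.
      intros y1 y2 Hy1. exfalso. apply (level_cover_out n j E y1 Hy1).
  - intros K. eapply Rle_trans; [apply level_cover_sum; auto|]. fold D.
    specialize (HN2 n ltac:(lia)).
    apply (Rmult_le_compat_l D) in HN2; [|lra].
    replace (D * (eps / D)) with eps in HN2 by (field; lra). exact HN2.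
Qed.

Lemma partition_sum_vanish_of_contracting s h k : 0 <= k < 1 ->
  (forall y, 0 <= y <= 1 -> transfer s h y <= k * h y) ->
  (exists m M, 0 < m /\ forall x, 0 <= x <= 1 -> m <= h x <= M) ->
  forall eps, 0 < eps -> exists n0, forall n, (n0 <= n)%nat -> partition_sum s n <= eps.
Proof.
  intros Hk Hsub [m [M [Hm HmM]]] eps Heps.
  destruct (HmM 0 ltac:(lra)) as [Hm0 HM0].
  destruct (pow_lt_1_zero k ltac:(rewrite Rabs_right; lra) (eps * m / M))
    as [n0 Hn0]; [apply Rdiv_lt_0_compat; nra|].
  exists n0. intros n Hn.
  eapply Rle_trans; [apply (partition_sum_le s h k m); try lra; auto; apply HmM|].
  specialize (Hn0 n Hn). rewrite Rabs_right in Hn0 by (apply Rle_ge, pow_le; lra).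
  apply (Rmult_le_reg_r (m / M)); [apply Rdiv_lt_0_compat; lra|].
  replace (k ^ n * h 0 / m * (m / M)) with (k ^ n * (h 0 / M)) by (field; lra).
  assert (h 0 / M <= 1).
  { unfold Rdiv. rewrite <- (Rinv_r M) by lra.
    apply Rmult_le_compat_r; [left; apply Rinv_0_lt_compat|]; lra. }
  assert (0 <= h 0 / M) by (apply Rdiv_le_0_compat; lra).
  assert (0 <= k ^ n) by (apply pow_le; lra).
  replace (eps * (m / M)) with (eps * m / M) by (field; lra). nra.
Qed.

Lemma lsum_filter_exists_le {A} (Q : nat -> A -> Prop) (F : A -> R) l K : (forall x, 0 <= F x) ->
  lsum F (filter (fun u => classicb (exists k, (k <= K)%nat /\ Q k u)) l)
  <= sum_f_R0 (fun k => lsum F (filter (fun u => classicb (Q k u)) l)) K.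
Proof.
  intros HF. rewrite lsum_filter.
  rewrite (sum_eq _ (fun k => lsum (fun x => if classicb (Q k x) then F x else 0) l))
    by (intros; apply lsum_filter).
  rewrite <- lsum_sum_f_R0. apply lsum_le. intros x _.
  assert (Hnn : forall j, 0 <= (if classicb (Q j x) then F x else 0))
    by (intros j; destruct (classicb (Q j x)); auto; lra).
  destruct (classicb (exists k, (k <= K)%nat /\ Q k x)) eqn:E.
  - apply classicb_true in E as [k [Hk HQ]].
    eapply Rle_trans; [|apply (sum_f_R0_ge_term _ K k Hnn Hk)].
    rewrite classicb_eq_true by exact HQ. lra.
  - apply cond_pos_sum, Hnn.
Qed.

Lemma sum_f_R0_half_pow K : sum_f_R0 (fun k => (/ 2) ^ S k) K <= 1.
Proof.
  assert (Hclosed : forall K, sum_f_R0 (fun k => (/ 2) ^ S k) K = 1 - (/ 2) ^ S K).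
  { induction K0; [simpl; field|]. rewrite tech5, IHK0. simpl. field. }
  rewrite Hclosed. pose proof (pow_lt (/ 2) (S K) ltac:(lra)). lra.
Qed.

(* Inflating the cover elements to radii at least [(tau 2^-(k+1))^(1/s)] makes every
   radius positive at a total cost of at most [tau] in the [s]-sum. *)
Lemma cover_radii s (U : nat -> R -> Prop) eps tau : 0 < s -> 0 < tau -> tau <= Rpower (/ 2) s ->
  (forall k, Rbar_le (diam (U k)) (/ 2)) ->
  (forall N, sum_n (fun k => diam_pow s (U k)) N <= eps) ->
  exists r : nat -> R, (forall k, 0 < r k <= / 2) /\
    (forall k y1 y2, U k y1 -> U k y2 -> Rabs (y1 - y2) <= r k) /\
    (forall K, sum_f_R0 (fun k => Rpower (r k) s) K <= eps + tau).
Proof.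
  intros Hs Htau Htau2 Hdiam Hsum.
  set (eta := fun k : nat => Rpower (tau * (/ 2) ^ S k) (/ s)).
  assert (Hpow : forall k, 0 < (/ 2) ^ S k <= 1).
  { intros k. split; [apply pow_lt; lra|]. rewrite <- (pow1 (S k)). apply pow_incr. lra. }
  assert (Heta_s : forall k, Rpower (eta k) s = tau * (/ 2) ^ S k).
  { intros k. unfold eta. rewrite Rpower_mult, Rinv_l by lra.
    apply Rpower_1, Rmult_lt_0_compat; auto. apply Hpow. }
  assert (Heta_le : forall k, eta k <= / 2).
  { intros k. unfold eta. rewrite <- (Rpower_1 (/ 2)) at 2 by lra.
    rewrite <- (Rinv_r s), <- Rpower_mult by lra.
    apply Rle_Rpower_l; [left; apply Rinv_0_lt_compat; auto|].
    pose proof (Hpow k). split; [apply Rmult_lt_0_compat; lra|nra]. }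
  set (r := fun k => Rmax (match diam (U k) with Finite d => d | _ => 0 end) (eta k)).
  exists r. split; [|split].
  - intros k. split; [eapply Rlt_le_trans; [apply Rpower_pos|apply Rmax_r]|].
    apply Rmax_lub; auto. pose proof (Hdiam k). destruct (diam (U k)); simpl in *; lra.
  - intros k y1 y2 H1 H2.
    destruct (diam_finite (U k) y1 (/ 2) H1 (Hdiam k)) as [d [Ed [_ Hd]]].
    unfold r. rewrite Ed. eapply Rle_trans; [apply Hd; auto|apply Rmax_l].
  - intros K. specialize (Hsum K). rewrite sum_n_Reals in Hsum.
    eapply Rle_trans with (sum_f_R0 (fun k => diam_pow s (U k) + tau * (/ 2) ^ S k) K).
    + apply sum_Rle. intros k _. unfold r.
      pose proof (diam_pow_nonneg s (U k)). assert (0 < eta k) by apply Rpower_pos.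
      destruct (diam (U k)) as [d| |] eqn:E;
        [destruct (Rle_lt_dec d (eta k))|..];
        try (rewrite Rmax_right by lra; rewrite Heta_s; lra).
      rewrite Rmax_left by lra. rewrite (diam_pow_finite s (U k) d E) by lra.
      pose proof (Hpow k). nra.
    + rewrite sum_plus.
      rewrite (sum_eq (fun k => tau * (/ 2) ^ S k) (fun k => (/ 2) ^ S k * tau)) by (intros; ring).
      rewrite <- scal_sum. pose proof (sum_f_R0_half_pow K). nra.
Qed.

Lemma first_crossing (F : nat -> R) r n0 : r < F 0%nat -> F n0 <= r ->
  exists n, F (S n) <= r /\ r < F n.
Proof.
  revert F; induction n0; intros F H0 H1; [lra|].
  destruct (Rle_lt_dec (F n0) r); [apply IHn0; auto|]. exists n0. auto.
Qed.

(* Compactness: a countable cover of [E] is refined by finitely many stopping words. *)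
Lemma finite_stopping_cut (U : nat -> R -> Prop) (r : nat -> R) :
  (forall k, 0 < r k <= / 2) ->
  (forall y, E_set y -> exists k, U k y) ->
  exists N K, forall w, In w (words N) ->
    exists u, prefixb u w = true /\ exists k, (k <= K)%nat /\ stopping_word (r k) (U k) u.
Proof.
  intros Hr Hcov.
  set (Q := fun k u => stopping_word (r k) (U k) u).
  assert (Hbar : forall p, exists n, exists k, Q k (prefix_word p n)).
  { intros p. destruct (E_set_point p) as [y [Hy Hin]]. destruct (Hcov y Hy) as [k Hk].
    destruct (Hr k) as [Hrk Hrk2].
    destruct (exp1_half_pow_small (r k) Hrk) as [N0 HN0].
    destruct (first_crossing (fun n => cyl_len (prefix_word p n)) (r k) N0) as [n [H1 H2]].
    - simpl. unfold cyl_len. simpl. lra.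
    - pose proof (cyl_len_le_pow (prefix_word p N0)) as Hl. rewrite length_prefix_word in Hl.
      specialize (HN0 N0 (le_n _)). lra.
    - exists (S n), k, (prefix_word p n), (p n). repeat split; auto. exists y. auto. }
  destruct (konig_uniform_bar (fun u => exists k, Q k u) Hbar) as [N HN].
  destruct (bar_bounded_index Q (words N)) as [K HK].
  { intros w Hw. apply HN, (length_words N w Hw). }
  exists N, K. exact HK.
Qed.

Lemma lsum_stopping_cut_le s (U : nat -> R -> Prop) (r : nat -> R) N K : 0 <= s ->
  (forall k, 0 < r k) ->
  (forall k y1 y2, U k y1 -> U k y2 -> Rabs (y1 - y2) <= r k) ->
  lsum (fun u => Rpower (cyl_deriv u 0) s)
    (filter (fun u => classicb (exists k, (k <= K)%nat /\ stopping_word (r k) (U k) u))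
      (words_upto N))
  <= 16 * exp 1 * Rpower (exp 1) s * sum_f_R0 (fun k => Rpower (r k) s) K.
Proof.
  intros Hs Hr HU.
  eapply Rle_trans; [apply lsum_filter_exists_le; intros; left; apply Rpower_pos|].
  rewrite scal_sum. apply sum_Rle. intros k _.
  destruct (classic (exists z, U k z)) as [[z Hz]|Hempty].
  - eapply Rle_trans.
    + apply (lsum_stopping_words_le (r k) (U k) (words_upto N) z s (Hr k) Hs
        (NoDup_words_upto N) Hz (HU k)).
    + rewrite <- Rpower_mult_distr by auto using exp_pos. right. ring.
  - rewrite <- (lsum_zero (filter (fun u => classicb (stopping_word (r k) (U k) u)) (words_upto N))).
    eapply Rle_trans; [apply lsum_le|].
    + intros u Hu. apply filter_In in Hu as [_ Hu]. apply classicb_true in Hu.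
      destruct Hu as [? [? [_ [_ [_ [y [Hy _]]]]]]]. exfalso. eauto.
    + rewrite lsum_zero. left. pose proof (exp_pos 1).
      repeat apply Rmult_lt_0_compat; try apply Rpower_pos; lra.
Qed.

Lemma not_hausdorff_null_of_partition_sum_ge s c0 : 0 < s -> 0 < c0 ->
  (forall n, c0 <= partition_sum s n) -> ~ hausdorff_null s E_set.
Proof.
  intros Hs Hc0 Hlow Hnull.
  set (D := Rpower (exp 1) s). assert (HD : 0 < D) by apply Rpower_pos.
  set (A := D * D * (16 * exp 1 * D)).
  assert (HA : 0 < A) by (pose proof (exp_pos 1); unfold A; repeat apply Rmult_lt_0_compat; lra).
  set (eps := c0 / (4 * A)). assert (Heps : 0 < eps) by (apply Rdiv_lt_0_compat; lra).
  set (tau := Rmin eps (Rpower (/ 2) s)).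
  assert (Htau : 0 < tau) by (apply Rmin_pos; [lra|apply Rpower_pos]).
  destruct (Hnull (/ 2) eps ltac:(lra) Heps) as [U [Hcov [Hdiam Hsum]]].
  destruct (cover_radii s U eps tau Hs Htau (Rmin_r _ _) Hdiam Hsum) as [r [Hr [HU Hrsum]]].
  destruct (finite_stopping_cut U r Hr Hcov) as [N [K HNK]].
  set (C := filter (fun u => classicb (exists k, (k <= K)%nat /\ stopping_word (r k) (U k) u))
              (words_upto N)).
  assert (Hcut : c0 <= D * D * lsum (fun u => Rpower (cyl_deriv u 0) s) C).
  { apply (partition_sum_cut s c0 C N); auto; [lra| |].
    - intros u Hu. apply filter_In in Hu as [Hu _]. apply length_words_upto, Hu.
    - intros w Hw. destruct (HNK w Hw) as [u [Hu Hk]]. exists u. split; auto.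
      apply filter_In. split; [|apply classicb_eq_true, Hk].
      apply in_words_upto. rewrite <- (length_words N w Hw). apply prefixb_length, Hu. }
  assert (HC : lsum (fun u => Rpower (cyl_deriv u 0) s) C <= 16 * exp 1 * D * (eps + eps)).
  { eapply Rle_trans; [apply lsum_stopping_cut_le; [lra|apply Hr|apply HU]|].
    pose proof (exp_pos 1). apply Rmult_le_compat_l; [left; repeat apply Rmult_lt_0_compat; lra|].
    specialize (Hrsum K). assert (tau <= eps) by apply Rmin_l. lra. }
  assert (c0 <= A * (eps + eps)).
  { eapply Rle_trans; [apply Hcut|]. unfold A.
    replace (D * D * (16 * exp 1 * D) * (eps + eps)) with (D * D * (16 * exp 1 * D * (eps + eps)))
      by ring.
    apply Rmult_le_compat_l; [nra|exact HC]. }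
  replace (A * (eps + eps)) with (c0 / 2) in H by (unfold eps; field; lra). lra.
Qed.

Lemma hausdorff_null_of_transfer_contracting s h k : 0 <= s -> 0 <= k < 1 ->
  cont_on01 h -> (forall y, 0 <= y <= 1 -> 0 < h y) ->
  (forall y, 0 <= y <= 1 -> transfer s h y <= k * h y) -> hausdorff_null s E_set.
Proof.
  intros Hs Hk Hc Hpos Hsub. apply hausdorff_null_of_partition_sum_vanish; auto.
  apply (partition_sum_vanish_of_contracting s h k); auto using cont_on01_bounds.
Qed.

Lemma not_hausdorff_null_of_transfer_expanding s h : 0 < s ->
  cont_on01 h -> (forall y, 0 <= y <= 1 -> 0 < h y) ->
  (forall y, 0 <= y <= 1 -> h y <= transfer s h y) -> ~ hausdorff_null s E_set.
Proof.
  intros Hs Hc Hpos Hsup. destruct (cont_on01_bounds h Hc Hpos) as [m [M [Hm HmM]]].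
  destruct (HmM 0 ltac:(lra)).
  apply (not_hausdorff_null_of_partition_sum_ge s (h 0 / M)); auto.
  - apply Rdiv_lt_0_compat; lra.
  - apply (partition_sum_ge s h M Hsup). intros y Hy. destruct (HmM y Hy). lra.
Qed.

Lemma ln4_pos : 0 < ln 4.
Proof. rewrite <- ln_1. apply ln_increasing; lra. Qed.

(* Since [1/4 <= dT b y <= 1], raising the exponent from [t] to at most [t + c] costs
   a factor of at most [4^c]. *)
Lemma Rpower_dT_shift b y s t c : 0 <= y <= 1 -> 0 <= c -> s <= t + c ->
  exp (- (c * ln 4)) * Rpower (dT b y) t <= Rpower (dT b y) s.
Proof.
  intros Hy Hc Hst. pose proof (dT_bounds b y Hy) as HdT. pose proof ln4_pos.
  assert (Hln : - ln 4 <= ln (dT b y) <= 0).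
  { rewrite <- ln_1, <- ln_Rinv by lra. split; apply ln_le; lra. }
  unfold Rpower. rewrite <- exp_plus. apply exp_le_compat.
  destruct (Rle_lt_dec s t); nra.
Qed.

Lemma transfer_exponent_shift s t c h : 0 <= c -> s <= t + c ->
  (forall y, 0 <= y <= 1 -> 0 < h y) ->
  forall y, 0 <= y <= 1 -> exp (- (c * ln 4)) * transfer t h y <= transfer s h y.
Proof.
  intros Hc Hst Hpos y Hy. unfold transfer.
  pose proof (Hpos _ (T_unit false y Hy)). pose proof (Hpos _ (T_unit true y Hy)).
  pose proof (Rpower_dT_shift false y s t c Hy Hc Hst).
  pose proof (Rpower_dT_shift true y s t c Hy Hc Hst). nra.
Qed.

Lemma transfer_ge_of_Mop_ratio t h c : (forall x, 0 <= x <= 1 -> 0 < h x) ->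
  (forall x, 0 <= x <= 1 -> c <= Mop t h x / h x) ->
  forall y, 0 <= y <= 1 -> c * h y <= transfer t h y.
Proof.
  intros Hpos H y Hy. specialize (H y Hy). specialize (Hpos y Hy).
  rewrite Mop_transfer in H by lra. apply (Rmult_le_compat_r (h y)) in H; [|lra].
  unfold Rdiv in H. rewrite Rmult_assoc, Rinv_l, Rmult_1_r in H by lra. exact H.
Qed.

Lemma transfer_le_of_Mop_ratio t h c : (forall x, 0 <= x <= 1 -> 0 < h x) ->
  (forall x, 0 <= x <= 1 -> Mop t h x / h x <= c) ->
  forall y, 0 <= y <= 1 -> transfer t h y <= c * h y.
Proof.
  intros Hpos H y Hy. specialize (H y Hy). specialize (Hpos y Hy).
  rewrite Mop_transfer in H by lra. apply (Rmult_le_compat_r (h y)) in H; [|lra].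
  unfold Rdiv in H. rewrite Rmult_assoc, Rinv_l, Rmult_1_r in H by lra. exact H.
Qed.

Lemma transfer_expands_below t beta h : 0 < beta -> (forall y, 0 <= y <= 1 -> 0 < h y) ->
  (forall y, 0 <= y <= 1 -> exp beta * h y <= transfer t h y) ->
  forall s, s <= t + beta / ln 4 -> forall y, 0 <= y <= 1 -> h y <= transfer s h y.
Proof.
  intros Hb Hpos Hexp s Hs y Hy. pose proof ln4_pos.
  pose proof (transfer_exponent_shift s t (beta / ln 4) h) as Hshift.
  replace (- (beta / ln 4 * ln 4)) with (- beta) in Hshift by (field; lra).
  eapply Rle_trans; [|apply Hshift; auto; left; apply Rdiv_lt_0_compat; lra].
  pose proof (Hexp y Hy). pose proof (exp_pos (- beta)).
  replace (h y) with (exp (- beta) * (exp beta * h y))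
    by (rewrite <- Rmult_assoc, <- exp_plus, Rplus_opp_l, exp_0; ring).
  apply Rmult_le_compat_l; lra.
Qed.

Lemma transfer_contracts_above t alpha h : 0 < alpha -> (forall y, 0 <= y <= 1 -> 0 < h y) ->
  (forall y, 0 <= y <= 1 -> transfer t h y <= exp (- alpha) * h y) ->
  forall s, t - alpha / (2 * ln 4) <= s ->
  forall y, 0 <= y <= 1 -> transfer s h y <= exp (- (alpha / 2)) * h y.
Proof.
  intros Ha Hpos Hcon s Hs y Hy. pose proof ln4_pos.
  pose proof (transfer_exponent_shift t s (alpha / (2 * ln 4)) h) as Hshift.
  replace (- (alpha / (2 * ln 4) * ln 4)) with (- (alpha / 2)) in Hshift by (field; lra).
  specialize (Hshift ltac:(left; apply Rdiv_lt_0_compat; lra) ltac:(lra) Hpos y Hy).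
  pose proof (Hcon y Hy). pose proof (exp_pos (alpha / 2)).
  replace (transfer s h y) with (exp (alpha / 2) * (exp (- (alpha / 2)) * transfer s h y))
    by (rewrite <- Rmult_assoc, <- exp_plus, Rplus_opp_r, exp_0; ring).
  replace (exp (- (alpha / 2)) * h y) with (exp (alpha / 2) * (exp (- alpha) * h y))
    by (rewrite <- Rmult_assoc, <- exp_plus; f_equal; f_equal; lra).
  apply Rmult_le_compat_l; lra.
Qed.

Lemma dimH_gt_of_not_null (E : R -> Prop) t t' : t < t' ->
  (forall s, 0 < s -> s <= t' -> ~ hausdorff_null s E) -> Rbar_lt t (dimH E).
Proof.
  intros Htt' Hnot. unfold dimH.
  destruct (Glb_Rbar_correct (fun s => 0 < s /\ hausdorff_null s E)) as [_ Hglb].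
  assert (Hle : Rbar_le t' (Glb_Rbar (fun s => 0 < s /\ hausdorff_null s E))).
  { apply Hglb. intros s [Hs Hn]. simpl. destruct (Rle_lt_dec s t'); [|lra].
    exfalso. apply (Hnot s); auto. }
  destruct (Glb_Rbar _); simpl in *; auto. lra.
Qed.

Lemma dimH_lt_of_null (E : R -> Prop) s t : 0 < s -> s < t -> hausdorff_null s E ->
  Rbar_lt (dimH E) t.
Proof.
  intros Hs Hst Hn. unfold dimH.
  destruct (Glb_Rbar_correct (fun s => 0 < s /\ hausdorff_null s E)) as [Hlb _].
  specialize (Hlb s (conj Hs Hn)). destruct (Glb_Rbar _); simpl in *; auto. lra.
Qed.

Theorem mainTheorem15 (t0 t1 : R) (f g : R -> R) (alpha beta : R) :
  0 < t0 -> t0 < t1 ->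
  cont_on01 f -> cont_on01 g ->
  (forall x, 0 <= x <= 1 -> 0 < f x) ->
  (forall x, 0 <= x <= 1 -> 0 < g x) ->
  0 < alpha -> 0 < beta ->
  (forall x, 0 <= x <= 1 -> exp beta <= Mop t0 g x / g x) ->
  (forall x, 0 <= x <= 1 -> Mop t1 f x / f x <= exp (- alpha)) ->
  Rbar_lt (Finite t0) (dimH E_set) /\ Rbar_lt (dimH E_set) (Finite t1).
Proof.
  intros Ht0 Ht01 Hcf Hcg Hfpos Hgpos Ha Hb Hg Hf. pose proof ln4_pos.
  split.
  - apply (dimH_gt_of_not_null _ t0 (t0 + beta / ln 4)).
    { assert (0 < beta / ln 4) by (apply Rdiv_lt_0_compat; lra). lra. }
    intros s Hs Hst. apply (not_hausdorff_null_of_transfer_expanding s g); auto.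
    apply (transfer_expands_below t0 beta); auto.
    apply transfer_ge_of_Mop_ratio; auto.
  - set (eta := Rmin (alpha / (2 * ln 4)) (t1 / 2)).
    assert (0 < eta) by (apply Rmin_pos; [apply Rdiv_lt_0_compat|]; lra).
    assert (eta <= alpha / (2 * ln 4)) by apply Rmin_l.
    assert (eta <= t1 / 2) by apply Rmin_r.
    apply (dimH_lt_of_null _ (t1 - eta)); [lra|lra|].
    apply (hausdorff_null_of_transfer_contracting _ f (exp (- (alpha / 2)))); auto; [lra| |].
    + split; [left; apply exp_pos|]. rewrite <- exp_0. apply exp_increasing. lra.
    + apply (transfer_contracts_above t1 alpha); auto; [|lra].
      apply transfer_le_of_Mop_ratio; auto.
Qed.
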